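(* Let $I=(G,T,k)$, $G=(V,E)$, be a Node Multiway Cut instance satisfying (R1) no two terminals are adjacent and $p(I)\ge 0$; (R2) no vertex of $V\setminus T$ is adjacent to two distinct terminals; (R3) for every terminal $t$ and every neighbour $w\in V\setminus T$ of $t$, the optimum of the LP-relaxation of $I$ with the additional constraint $d_w=0$ is strictly larger than $LP(I)$. Let $t\in T$ and let $w\in V\setminus T$ be a neighbour of $t$. Let $I_1=(G-w,T,k-1)$ and $I_2=(G/tw,T,k)$. Then $LP(I_1)\ge LP(I)-1/2$ and $LP(I_2)\ge LP(I)+1/2$; consequently $p(I_1)\le p(I)-1/2$ and $p(I_2)\le p(I)-1/2$. Moreover, $I$ is a YES-instance iff $I_1$ or $I_2$ is a YES-instance.
   Context: A Node Multiway Cut instance $I=(G,T,k)$ consists of a simple undirected graph $G=(V,E)$, a set $T\subseteq V$ of terminals and an integer $k$; it is a YES-instance iff there is a set $X\subseteq V\setminus T$ with $|X|\le k$ such that every path in $G$ between two distinct terminals contains a vertex of $X$. Let $\mathcal P(I)$ be the set of all simple paths in $G$ connecting two distinct terminals. The LP-relaxation of $I$ is: minimize $\sum_{v\in V\setminus T} d_v$ subject to $\sum_{v\in V(P)\setminus T} d_v\ge 1$ for every $P\in\mathcal P(I)$ and $d_v\ge 0$ for all $v\in V\setminus T$. $LP(I)$ denotes its optimum value and $p(I)=k-LP(I)$. $G-w$ is $G$ with vertex $w$ and its incident edges removed. For a terminal $t$ and a non-terminal neighbour $w$, $G/tw$ is obtained by deleting $t$ and $w$ and adding a new vertex adjacent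 to all vertices formerly adjacent to $t$ or $w$; this new vertex is identified with $t$, so the terminal set remains $T$. *)

From HB Require Import structures.
From mathcomp Require Import all_boot all_order all_algebra.
Set Implicit Arguments. Unset Strict Implicit. Unset Printing Implicit Defensive.
Import Order.TTheory GRing.Theory Num.Theory.

(* A Node Multiway Cut instance on an ambient finite vertex type V:
   the graph G has vertex set [vset] and (simple) adjacency [edge]
   (only edges between vertices of [vset] matter), terminal set [terms]
   and budget [budget] (an integer, since k-1 may be formed). *)
Record instance (V : finType) := Inst {
  vset : {set V};
  edge : rel V;
  terms : {set V};
  budget : int }.

Definition wf_instance (V : finType) (I : instance V) : Prop :=
  [/\ symmetric (edge I), irreflexive (edge I) & terms I \subset vset I].

Definition term_path (V : finType) (I : instance V) (p : seq V) : bool :=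
  match p with
  | [::] => false
  | x :: q => [&& path (edge I) x q, uniq p, all (fun v => v \in vset I) p,
                 x \in terms I, last x q \in terms I & x != last x q]
  end.

Definition is_cut (V : finType) (I : instance V) (X : {set V}) : Prop :=
  X \subset vset I :\: terms I /\
  forall p, term_path I p -> has (fun v => v \in X) p.

Definition yes_instance (V : finType) (I : instance V) : Prop :=
  exists X : {set V}, is_cut I X /\ (Posz #|X| <= budget I)%R.

Local Open Scope ring_scope.

(* LP-relaxation: variables d_v for v in V \ T (d is a function on the
   ambient type; only its values on vset \ terms are relevant). *)
Definition lp_feasible (R : realFieldType) (V : finType) (I : instance V)
    (d : V -> R) : Prop :=
  (forall v, v \in vset I :\: terms I -> 0 <= d v) /\
  (forall p, term_path I p -> 1 <= \sum_(v <- p | v \notin terms I) d v).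

Definition lp_cost (R : realFieldType) (V : finType) (I : instance V)
    (d : V -> R) : R := \sum_(v in vset I :\: terms I) d v.

Definition lp_opt_st (R : realFieldType) (V : finType) (I : instance V)
    (extra : (V -> R) -> Prop) (x : R) : Prop :=
  (exists d, [/\ lp_feasible I d, extra d & lp_cost I d = x]) /\
  (forall d, lp_feasible I d -> extra d -> x <= lp_cost I d).

Definition lp_opt (R : realFieldType) (V : finType) (I : instance V) (x : R) :=
  lp_opt_st I (fun _ => True) x.

Definition pval (R : realFieldType) (V : finType) (I : instance V) (x : R) : R :=
  (budget I)%:~R - x.

Definition del_inst (V : finType) (I : instance V) (w : V) : instance V :=
  Inst (vset I :\ w) (edge I) (terms I) (budget I - 1).

(* G / tw: w is deleted and t (the merged vertex) becomes adjacent to all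
   vertices formerly adjacent to t or w; terminals and budget unchanged *)
Definition contr_inst (V : finType) (I : instance V) (t w : V) : instance V :=
  Inst (vset I :\ w)
       (fun x y => (x != y) && [|| edge I x y, (x == t) && edge I w y
                                 | (y == t) && edge I w x])
       (terms I) (budget I).

From HB Require Import structures.
From mathcomp Require Import all_boot all_order all_algebra zify lra.
Import Order.TTheory GRing.Theory Num.Theory.
Local Open Scope ring_scope.
Set Implicit Arguments. Unset Strict Implicit.

(* The key fact is the half-integrality of the LP relaxation: every feasible
   solution d can be rounded to a feasible solution with values in {0,1/2,1}
   and no larger cost.  We prove it by threshold rounding: let cap = min(d,1)
   on the non-terminals and let dist s v be the cap-length of a shortest s-v
   walk (truncated at 1); for r in (0,1/2], a non-terminal v gets 1/2 for every
   terminal s whose ball {u | dist s u < r} has v on its boundary, and at most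
   1.  Each such rounding is feasible, and its cost averaged over r is at most
   half the cost of d, so some threshold r does not increase the cost; the
   average is a finite step-function integral over the breakpoints of r.

   After the
   rounding argument, (R1)-(R3) show that an optimal solution is positive at
   two vertices of every terminal path.  The contraction bound follows from
   (R3) and half-integrality; for the deletion bound, a half-valued optimum of
   G - w raised to 1 at w would be optimal for G, and then raising it to 1/2
   only would already give a feasible solution cheaper than LP(G). *)

Section NonnegSums.
Variables (R : realFieldType) (T : eqType) (F : T -> R) (P : pred T).

Lemma le_sum_sub (q p : seq T) :
  uniq q -> (forall x, x \in q -> P x -> x \in p) ->
  (forall x, x \in p -> P x -> 0 <= F x) ->
  \sum_(x <- q | P x) F x <= \sum_(x <- p | P x) F x.
Proof.
elim: p q => [|y p IH] q Uq Sq Fp.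
  by rewrite big_nil big1_seq // => x /andP[Px /Sq /(_ Px)].
have Fp' x : x \in p -> P x -> 0 <= F x by move=> xp; apply: Fp; rewrite inE xp orbT.
rewrite big_cons; have [yq|yq] := boolP (y \in q).
  rewrite (perm_big _ (perm_to_rem yq)) big_cons.
  suff le_rem : \sum_(x <- rem y q | P x) F x <= \sum_(x <- p | P x) F x.
    by case: (P y); rewrite ?lerD2l.
  apply: IH (rem_uniq y Uq) _ Fp' => x xr Px.
  have := Sq x (mem_rem xr) Px; rewrite inE => /predU1P[xy|//].
  by move: xr; rewrite xy mem_rem_uniqF.
have le_p : \sum_(x <- q | P x) F x <= \sum_(x <- p | P x) F x.
  apply: IH Uq _ Fp' => x xq Px; have := Sq x xq Px.
  by rewrite inE => /predU1P[xy|//]; move: yq; rewrite -xy xq.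
case: ifP => Py; last exact: le_p.
by rewrite -[X in X <= _]add0r lerD // Fp ?mem_head.
Qed.

Lemma le_sum_one (p : seq T) u :
  u \in p -> P u -> (forall x, x \in p -> P x -> 0 <= F x) ->
  F u <= \sum_(x <- p | P x) F x.
Proof.
move=> up Pu Fp; have := @le_sum_sub [:: u] p isT _ Fp.
by rewrite big_cons big_nil Pu addr0; apply=> x; rewrite inE => /eqP->.
Qed.

Lemma le_sum_two (p : seq T) u u' :
  u != u' -> u \in p -> u' \in p -> P u -> P u' ->
  (forall x, x \in p -> P x -> 0 <= F x) ->
  F u + F u' <= \sum_(x <- p | P x) F x.
Proof.
move=> uu' up u'p Pu Pu' Fp.
have := @le_sum_sub [:: u; u'] p; rewrite /= inE uu' !big_cons big_nil Pu Pu' addr0.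
by apply=> // x; rewrite !inE => /orP[]/eqP->.
Qed.

End NonnegSums.

Lemma seq_argmin (R : realFieldType) (T : eqType) (l : seq T) (f : T -> R) :
  l != [::] -> exists2 x, x \in l & forall y, y \in l -> f x <= f y.
Proof.
elim: l => [//|y l IH] _; have [->|/IH[x xl xmin]] := eqVneq l [::].
  by exists y; rewrite ?mem_head // => z; rewrite inE => /eqP->.
have [fyx|fxy] := leP (f y) (f x).
  by exists y; rewrite ?mem_head // => z; rewrite inE => /predU1P[->//|/xmin/(le_trans fyx)].
exists x; first by rewrite inE xl orbT.
by move=> z; rewrite inE => /predU1P[->|/xmin //]; exact: ltW.
Qed.

Lemma bigmin_attained (R : realFieldType) (T : eqType) (r : seq T) (P : pred T)
    (F : T -> R) x0 :
  \big[Num.min/x0]_(i <- r | P i) F i = x0 \/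
  exists2 i, i \in r & P i /\ \big[Num.min/x0]_(i <- r | P i) F i = F i.
Proof.
rewrite big_seq_cond; elim/big_ind: _ => [|a b|i /andP[ir Pi]]; [by left| |by right; exists i].
by rewrite minEle; case: ifP.
Qed.

Lemma path_crossing (T : eqType) (e : rel T) (P : pred T) x q :
  path e x q -> P x -> ~~ P (last x q) ->
  exists a b, [/\ e a b, P a, ~~ P b, a \in x :: q & b \in q].
Proof.
elim: q x => [|y q IH] x /=; first by move=> _ ->.
case/andP=> exy pq Px; have [Py|Py] := boolP (P y); last first.
  by move=> _; exists x, y; rewrite !mem_head.
case/(IH y pq Py) => a [b [eab Pa Pb ain bin]].
by exists a, b; split; rewrite // inE ?ain ?bin orbT.
Qed.

Section TerminalPaths.
Variables (V : finType) (J : instance V).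

Lemma term_path_uniq p : term_path J p -> uniq p.
Proof. by case: p => [//|x p] /and5P[]. Qed.

Lemma term_path_vset p : term_path J p -> {subset p <= vset J}.
Proof. by case: p => [//|x p] /and5P[_ _ /allP]. Qed.

Lemma lazy_walk_term_path x q :
  path (fun a b => (a == b) || edge J a b) x q -> {subset x :: q <= vset J} ->
  x \in terms J -> last x q \in terms J -> x != last x q ->
  exists2 p, term_path J p & {subset p <= x :: q}.
Proof.
move=> pq qV xT; case: (shortenP pq) => p' pp' up' sp' lT xl.
have strict : path (edge J) x p'.
  elim: p' x pp' up' {sp' lT xl xT pq qV} => [//|y p' IH] x /= /andP[/orP[/eqP xy|exy] pp'].
    by rewrite xy inE eqxx.
  by case/andP=> _ up'; rewrite exy IH.
have sub : {subset x :: p' <= x :: q}.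
  by move=> z; rewrite !inE => /predU1P[->|/sp' ->]; rewrite ?eqxx ?orbT.
exists (x :: p') => //; rewrite /term_path strict up' xT lT xl !andbT.
by apply/allP => z /sub /qV.
Qed.

Lemma walk_term_path x q :
  path (edge J) x q -> {subset x :: q <= vset J} ->
  x \in terms J -> last x q \in terms J -> x != last x q ->
  exists2 p, term_path J p & {subset p <= x :: q}.
Proof. by move=> pq; apply: lazy_walk_term_path; apply: sub_path pq => a b ->; rewrite orbT. Qed.

Lemma term_path_rev p : symmetric (edge J) -> term_path J p -> term_path J (rev p).
Proof.
case: p => [//|x q] symJ /and5P[pq uq aq xT /andP[lT xl]].
have rev_eq : rev (x :: q) = last x q :: rev (belast x q) by rewrite lastI rev_rcons.
have last_rev : last (last x q) (rev (belast x q)) = x.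
  by case: q {pq uq aq lT xl rev_eq} => [//|y q] /=; rewrite rev_cons last_rcons.
have := rev_uniq (x :: q); have := all_rev (fun v => v \in vset J) (x :: q).
rewrite rev_eq /term_path => -> ->; rewrite last_rev lT xT eq_sym xl uq aq rev_path.
by rewrite (eq_path (e' := edge J)) => [|a b]; [rewrite pq | exact: symJ].
Qed.

End TerminalPaths.

Definition set_at (V : eqType) (R : Type) (d : V -> R) (w : V) (c : R) : V -> R :=
  fun v => if v == w then c else d v.

Section Deletion.
Variables (V : finType) (J : instance V) (w : V).
Hypothesis wN : w \in vset J :\: terms J.

Lemma term_path_del p : term_path (del_inst J w) p = term_path J p && (w \notin p).
Proof.
have all_del s : all (fun v => v \in vset J :\ w) s =
                 all (fun v => v \in vset J) s && (w \notin s).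
  elim: s => [//|y s IH] /=; rewrite IH in_setD1 inE negb_or (eq_sym w).
  by case: (y == w); case: (y \in vset J); rewrite /= ?andbF.
case: p => [//|x p]; rewrite /term_path all_del.
by case: (path _ _ _); case: (uniq _); case: (all _ _); case: (w \notin _);
   rewrite ?andbF ?andbT.
Qed.

Lemma cost_del (R : realFieldType) (d : V -> R) :
  lp_cost J d = d w + lp_cost (del_inst J w) d.
Proof.
rewrite /lp_cost (bigD1 w) //=; congr (_ + _); apply: eq_bigl => v.
by rewrite !inE; case: (v == w); case: (v \in terms J); case: (v \in vset J).
Qed.

Lemma cost_set_at (R : realFieldType) (d : V -> R) c :
  lp_cost J (set_at d w c) = c + lp_cost (del_inst J w) d.
Proof.
rewrite cost_del /set_at eqxx; congr (_ + _); apply: eq_bigr => v.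
by rewrite !inE => /and3P[_ /negbTE -> _].
Qed.

Lemma feasible_set_at (R : realFieldType) (h : V -> R) c :
  lp_feasible (del_inst J w) h -> 0 <= c ->
  (forall p, term_path J p -> w \in p ->
     1 <= \sum_(v <- p | v \notin terms J) set_at h w c v) ->
  lp_feasible J (set_at h w c).
Proof.
move=> [h_ge0 h_paths] c_ge0 through_w; split=> [v|p tp].
  rewrite /set_at; case: eqP => // /eqP vw vN; apply: h_ge0.
  by move: vN; rewrite !inE vw.
have [wp|wp] := boolP (w \in p); first exact: through_w.
have tp' : term_path (del_inst J w) p by rewrite term_path_del tp.
apply: le_trans (h_paths p tp') _; rewrite le_eqVlt; apply/orP; left.
rewrite big_seq_cond [X in _ == X]big_seq_cond; apply/eqP/eq_bigr => v /andP[vp _].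
by rewrite /set_at; case: eqP => // vw; move: wp; rewrite -vw vp.
Qed.

End Deletion.

Section Contraction.
Variables (V : finType) (I : instance V) (t w : V).
Hypotheses (wfI : wf_instance I) (tT : t \in terms I)
  (wN : w \in vset I :\: terms I) (etw : edge I t w).

Let symI : symmetric (edge I). Proof. by case: wfI. Qed.
Let irrI : irreflexive (edge I). Proof. by case: wfI. Qed.
Let wT : w \notin terms I. Proof. by move: wN; rewrite in_setD => /andP[]. Qed.
Let wV : w \in vset I. Proof. by move: wN; rewrite in_setD => /andP[]. Qed.
Let tV : t \in vset I. Proof. by case: wfI => _ _ /subsetP; apply. Qed.
Let tw : t != w. Proof. by apply: contraNneq wT => <-. Qed.

Local Notation G' := (contr_inst I t w).

Lemma contr_symmetric : symmetric (edge G').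
Proof.
move=> a b /=; rewrite eq_sym symI; congr (_ && _).
by case: (a == t); case: (b == t); case: (edge I b a); case: (edge I w a); case: (edge I w b).
Qed.

(* Expanding a walk of G/tw into a walk of G: a step that is not an edge of G
   was created by the contraction and is routed through w. *)
Fixpoint expand_walk x p := match p with
  | [::] => [::]
  | y :: p' => (if edge I x y then [:: y] else [:: w; y]) ++ expand_walk y p'
  end.

Lemma expand_walkP x p : path (edge G') x p ->
  [/\ path (edge I) x (expand_walk x p), last x (expand_walk x p) = last x p &
      {subset expand_walk x p <= w :: p}].
Proof.
elim: p x => [|y p IH] x //= /andP[exy pp]; have [IH1 IH2 IH3] := IH y pp.
split.
- case: ifP => exy'; first by rewrite /= exy'.
  move: exy; rewrite /= exy' /= => /andP[_ /orP[/andP[/eqP xt ewy]|/andP[/eqP yt ewx]]].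
    by rewrite xt /= etw ewy.
  by rewrite yt /= symI ewx symI etw -yt IH1.
- by case: ifP => _; rewrite last_cat.
- move=> z; rewrite mem_cat => /orP[|/IH3]; last first.
    by rewrite !inE => /predU1P[->|->]; rewrite ?eqxx ?orbT.
  case: ifP => _; rewrite !inE; first by move=> /eqP->; rewrite eqxx orbT.
  by move=> /predU1P[->|/eqP->]; rewrite eqxx ?orbT.
Qed.

Lemma lift_term_path p : term_path G' p ->
  exists2 q, term_path I q & {subset q <= w :: p}.
Proof.
case: p => [//|x p] tp; have pV := term_path_vset tp.
move: tp => /and5P[pp _ _ xT /andP[lT xl]]; have [P1 P2 P3] := expand_walkP pp.
have sub : {subset x :: expand_walk x p <= w :: x :: p}.
  by move=> z; rewrite !inE => /orP[->|/P3]; rewrite ?orbT // inE => /orP[] ->; rewrite ?orbT.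
have [q tq sq] : exists2 q, term_path I q & {subset q <= x :: expand_walk x p}.
  apply: (walk_term_path P1); rewrite ?P2 //.
  by move=> z /sub; rewrite inE => /predU1P[->//|/pV /=]; rewrite in_setD1 => /andP[].
by exists q => // z /sq /sub.
Qed.

Definition merge_w v := if v == w then t else v.

Lemma proj_term_path p : term_path I p ->
  exists2 q, term_path G' q & {subset q <= map merge_w p}.
Proof.
case: p => [//|x p] tp; have pV := term_path_vset tp.
move: tp => /and5P[pp _ _ xT /andP[lT xl]].
have mx : merge_w x = x by rewrite /merge_w; case: eqP => // xw; move: wT; rewrite -xw xT.
have ml : merge_w (last x p) = last x p.
  by rewrite /merge_w; case: eqP => // lw; move: wT; rewrite -lw lT.
have lazy : path (fun a b => (a == b) || edge G' a b) (merge_w x) (map merge_w p).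
  elim: p x pp {pV lT xl mx ml xT} => [//|y p IH] x /= /andP[exy pp].
  rewrite IH // andbT /merge_w.
  have [xw|xw] := eqVneq x w; have [yw|yw] := eqVneq y w.
  - by rewrite xw yw irrI in exy.
  - by rewrite eqxx -xw exy /= !orbT andbT orbN.
  - by rewrite eqxx -yw (symI y x) exy /= !orbT andbT orbN.
  - by rewrite exy /= andbT orbN.
apply: (lazy_walk_term_path lazy); rewrite ?last_map ?ml ?mx //.
move=> z; rewrite -{1}mx -map_cons => /mapP[v /pV vV ->]; rewrite /merge_w /= in_setD1.
by case: (v =P w) => [_|/eqP vw]; rewrite ?tw ?tV ?vw.
Qed.

Lemma cut_del X : is_cut I X -> w \in X -> is_cut (del_inst I w) (X :\ w).
Proof.
move=> [/subsetP XN cutX] wX; split.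
  by apply/subsetP => z; rewrite !inE => /andP[-> /XN]; rewrite !inE.
move=> p; rewrite term_path_del => /andP[/cutX /hasP[z zp zX] wp].
by apply/hasP; exists z; rewrite // in_setD1 zX andbT; apply: contraNneq wp => <-.
Qed.

Lemma cut_contr X : is_cut I X -> w \notin X -> is_cut G' X.
Proof.
move=> [/subsetP XN cutX] wX; split.
  by apply/subsetP => z zX; move: (XN z zX); rewrite !inE => /andP[-> ->];
     rewrite andbT; apply: contraNneq wX => <-.
move=> p /lift_term_path[q /cutX /hasP[z zq zX] sq].
apply/hasP; exists z => //; move: (sq z zq); rewrite inE => /predU1P[zw|//].
by move: wX; rewrite -zw zX.
Qed.

Lemma cut_of_del X : is_cut (del_inst I w) X -> is_cut I (w |: X).
Proof.
move=> [/subsetP XN cutX]; split.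
  apply/subsetP => z; rewrite in_setU1 => /predU1P[->//|/XN].
  by rewrite !inE => /and3P[-> _ ->].
move=> p tp; have [wp|wp] := boolP (w \in p).
  by apply/hasP; exists w; rewrite ?setU11.
have /cutX /hasP[z zp zX] : term_path (del_inst I w) p by rewrite term_path_del tp.
by apply/hasP; exists z; rewrite ?in_setU1 ?zX ?orbT.
Qed.

Lemma cut_of_contr X : is_cut G' X -> is_cut I X.
Proof.
move=> [/subsetP XN cutX]; split.
  by apply/subsetP => z /XN; rewrite !inE => /and3P[-> _ ->].
move=> p /proj_term_path[q /cutX /hasP[z zq zX] sq].
have /mapP[v vp zv] := sq z zq; apply/hasP; exists v => //.
move: zv; rewrite /merge_w; case: eqP => [_ zt|_ <- //].
by move: (XN z zX); rewrite in_setD zt tT.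
Qed.

(* The branching is exhaustive and sound: w is in the solution (delete it) or
   not (then it may be merged into t). *)
Lemma yes_del_or_contr :
  yes_instance I <-> yes_instance (del_inst I w) \/ yes_instance G'.
Proof.
split=> [[X [cX kX]]|[[X [cX kX]]|[X [cX kX]]]].
- have [wX|wX] := boolP (w \in X); [left|right].
    exists (X :\ w); split; first exact: cut_del.
    by move: kX; rewrite /= (cardsD1 w X) wX; move: #|X :\ w| => n; lia.
  by exists X; split; first exact: cut_contr.
- exists (w |: X); split; first exact: cut_of_del.
  by move: kX; rewrite /= cardsU1; case: (w \in X); move: #|X| => n; lia.
- by exists X; split; first exact: cut_of_contr.
Qed.

(* LP(G/tw) is the LP of G under the extra constraint d_w = 0: solutions of
   G/tw extended by 0 at w are feasible for G, and solutions of G vanishing at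
   w are feasible for G/tw. *)
Lemma feasible_of_contr (R : realFieldType) (d : V -> R) :
  lp_feasible G' d -> lp_feasible I (set_at d w 0).
Proof.
move=> [d_ge0 d_paths]; split=> [v|p tp].
  rewrite /set_at; case: eqP => // /eqP vw vN; apply: d_ge0.
  by move: vN; rewrite !inE vw.
have [q tq sq] := proj_term_path tp; apply: le_trans (d_paths q tq) _.
have qV := term_path_vset tq.
have -> : \sum_(v <- q | v \notin terms G') d v =
          \sum_(v <- q | v \notin terms I) set_at d w 0 v.
  rewrite big_seq_cond [RHS]big_seq_cond; apply: eq_bigr => v /andP[/qV vV _].
  by move: vV; rewrite /set_at in_setD1 => /andP[/negbTE ->].
apply: le_sum_sub (term_path_uniq tq) _ _ => [v vq vT|v vp vT].
  have /mapP[u up vu] := sq v vq; move: vT; rewrite vu /merge_w.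
  by case: eqP => [_|_ _]; rewrite ?tT.
rewrite /set_at; case: eqP => // /eqP vw; apply: d_ge0.
by rewrite !inE vw vT (term_path_vset tp vp).
Qed.

Lemma feasible_contr (R : realFieldType) (d : V -> R) :
  lp_feasible I d -> d w = 0 -> lp_feasible G' d.
Proof.
move=> [d_ge0 d_paths] dw0; split=> [v|q tq].
  by rewrite !inE => /and3P[vT _ vV]; apply: d_ge0; rewrite !inE vT vV.
have [p tp sp] := lift_term_path tq; apply: le_trans (d_paths p tp) _.
have := le_sum_sub (F := d) (P := fun v => v \notin terms I) (term_path_uniq tp)
  (fun v vp _ => sp v vp).
rewrite big_cons wT dw0 add0r; apply=> v; rewrite inE => /predU1P[->|vq vT]; first by rewrite dw0.
by apply: d_ge0; rewrite !inE vT; move: (term_path_vset tq vq); rewrite in_setD1 => /andP[].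
Qed.

Lemma lp_contr_restr (R : realFieldType) (x : R) :
  lp_opt G' x -> lp_opt_st I (fun d : V -> R => d w = 0) x.
Proof.
case=> [[d [fd _ cd]] lb]; split.
  exists (set_at d w 0); split; first exact: feasible_of_contr.
    by rewrite /set_at eqxx.
  by rewrite cost_set_at // add0r.
by move=> d' fd' dw0; rewrite (cost_del wN) dw0 add0r; apply: lb; first exact: feasible_contr.
Qed.

End Contraction.

Definition indicator {R : realFieldType} (b : bool) : R := if b then 1 else 0.

Section StepSums.
Variable R : realFieldType.
Implicit Types (x q : R) (l : seq R) (f g : R -> R).

(* stepsum x l f = sum_i (l_i - l_(i-1)) * f l_i with l_0 = x: for sorted l
   this is the integral over (x, last x l] of the step function equal to
   f l_i on (l_(i-1), l_i]. *)
Fixpoint stepsum x l f : R :=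
  if l is y :: l' then (y - x) * f y + stepsum y l' f else 0.

Lemma stepsumD x l f g :
  stepsum x l (fun r => f r + g r) = stepsum x l f + stepsum x l g.
Proof. by elim: l x => [|y l IH] x /=; rewrite ?addr0 // IH mulrDr addrACA. Qed.

Lemma stepsumB x l f g :
  stepsum x l (fun r => f r - g r) = stepsum x l f - stepsum x l g.
Proof. by elim: l x => [|y l IH] x /=; rewrite ?subr0 // IH mulrBr opprD addrACA. Qed.

Lemma stepsumZ x l c f : stepsum x l (fun r => c * f r) = c * stepsum x l f.
Proof. by elim: l x => [|y l IH] x /=; rewrite ?mulr0 // IH mulrDr mulrCA. Qed.

Lemma stepsum_sum (T : finType) (A : {set T}) x l (F : T -> R -> R) :
  stepsum x l (fun r => \sum_(v in A) F v r) = \sum_(v in A) stepsum x l (F v).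
Proof. by elim: l x => [|y l IH] x /=; [rewrite big1 | rewrite IH mulr_sumr -big_split]. Qed.

Lemma stepsum_eq0 x l f : (forall y, y \in l -> f y = 0) -> stepsum x l f = 0.
Proof.
elim: l x => [//|y l IH] x /= f0.
by rewrite f0 ?mem_head // mulr0 add0r IH // => z zl; rewrite f0 // inE zl orbT.
Qed.

Lemma stepsum_mono x l f g : path <=%R x l -> (forall y, y \in l -> f y <= g y) ->
  stepsum x l f <= stepsum x l g.
Proof.
elim: l x => [//|y l IH] x /= /andP[xy pl] fg.
rewrite lerD ?ler_wpM2l ?subr_ge0 ?fg ?mem_head //.
by apply: IH => // z zl; rewrite fg // inE zl orbT.
Qed.

Lemma stepsum_indicator x l q : path <=%R x l -> q \in x :: l ->
  stepsum x l (fun r => indicator (r <= q)) = q - x.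
Proof.
elim: l x => [|y l IH] x /=; first by move=> _; rewrite inE => /eqP->; rewrite subrr.
case/andP=> xy pl; have ge_y := order_path_min le_trans pl.
have [ql _|qNl] := boolP (q \in y :: l).
  have yq : y <= q by move: ql; rewrite inE => /predU1P[->//|/(allP ge_y)].
  by rewrite IH // /indicator yq mulr1 addrC addrA subrK.
rewrite inE (negbTE qNl) orbF => /eqP qx.
have above_q (z : R) : z \in y :: l -> indicator (z <= q) = 0.
  rewrite /indicator; have [->|zq] := eqVneq z q; first by rewrite (negbTE qNl).
  move=> zyl; have yz : y <= z by move: zyl; rewrite inE => /predU1P[->//|/(allP ge_y)].
  by rewrite lt_geF // lt_neqAle eq_sym zq qx (le_trans xy yz).
rewrite above_q ?mem_head // mulr0 add0r stepsum_eq0 => [|z zl]; first by rewrite qx subrr.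
by rewrite above_q // inE zl orbT.
Qed.

End StepSums.

Section Clip.
Variable R : realFieldType.

Lemma half_gt0 : (0 : R) < 2^-1. Proof. by rewrite invr_gt0 ltr0n. Qed.

(* Projection onto [0, 1/2], the range of the rounding thresholds. *)
Definition clip (z : R) : R := if z <= 0 then 0 else if z <= 2^-1 then z else 2^-1.

Lemma clip_ge0 z : 0 <= clip z.
Proof.
rewrite /clip; case: (lerP z 0) => // z0.
by case: (lerP z 2^-1) => _; [exact: ltW | exact: ltW half_gt0].
Qed.

Lemma clip_le_half z : clip z <= 2^-1.
Proof. by rewrite /clip; case: (lerP z 0) => _; [exact: ltW half_gt0 | case: (lerP z 2^-1)]. Qed.

Lemma clip_leE r z : 0 < r -> r <= 2^-1 -> (r <= clip z) = (r <= z).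
Proof.
move=> r0 rh; rewrite /clip; case: (lerP z 0) => z0; case: (lerP z 2^-1) => zh;
by apply/idP/idP => H; lra.
Qed.

(* The measure of the thresholds in (0, 1/2] charged to a vertex of capped
   value e at distance D from its nearest terminal (see [round_avg]). *)
Lemma clip_bound (D e : R) : 0 <= e -> e <= D -> D <= 1 ->
  (clip D - clip (D - e)) + (2^-1 - clip (Num.max (D - e) (1 - D))) <= e.
Proof.
rewrite /clip maxEle => *; case: (lerP (D - e) (1 - D)) => ?;
case: (lerP D 0) => ?; case: (lerP D 2^-1) => ?; case: (lerP (D - e) 0) => ?;
case: (lerP (D - e) 2^-1) => ?; case: (lerP (1 - D) 0) => ?;
case: (lerP (1 - D) 2^-1) => ?; lra.
Qed.

End Clip.

Definition half_valued (R : realFieldType) (V : Type) (h : V -> R) : Prop :=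
  forall v, h v = 0 \/ h v = 2^-1 \/ h v = 1.

Section Rounding.
Variables (R : realFieldType) (V : finType) (J : instance V) (d : V -> R).
Hypotheses (symJ : symmetric (edge J)) (fd : lp_feasible J d).

Local Notation N := (vset J :\: terms J).

Definition cap v : R := if v \in N then Num.min (d v) 1 else 0.

Lemma cap_ge0 v : 0 <= cap v.
Proof. by rewrite /cap; case: ifP => // vN; rewrite le_min ler01 fd.1. Qed.

Lemma cap_le1 v : cap v <= 1.
Proof. by rewrite /cap; case: ifP => _; rewrite ?ler01 // ge_min lexx orbT. Qed.

Lemma cap_term v : v \in terms J -> cap v = 0.
Proof. by move=> vT; rewrite /cap inE vT. Qed.

Lemma cap_le v : v \in N -> cap v <= d v.
Proof. by move=> vN; rewrite /cap vN ge_min lexx. Qed.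

Definition clen (q : seq V) : R := \sum_(x <- q) cap x.

Lemma clen_ge0 q : 0 <= clen q.
Proof. by apply: sumr_ge0 => x _; apply: cap_ge0. Qed.

Lemma clen_sub q p : uniq q -> {subset q <= p} -> clen q <= clen p.
Proof.
move=> uq sq; apply: (le_sum_sub (F := cap) (P := predT)) => // [x xq _|x _ _].
  exact: sq.
exact: cap_ge0.
Qed.

Lemma cap_feasible p : term_path J p -> 1 <= clen p.
Proof.
move=> tp; have pV := term_path_vset tp.
have [/hasP[v vp /andP[vT dv]]|/hasPn small] :=
  boolP (has (fun v => (v \notin terms J) && (1 <= d v)) p).
  have -> : 1 = cap v by rewrite /cap inE vT pV //; apply/esym/min_idPr.
  by apply: (le_sum_one (P := predT)) => // x _ _; apply: cap_ge0.
apply: le_trans (fd.2 p tp) _.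
have -> : clen p = \sum_(v <- p | v \notin terms J) cap v.
  rewrite /clen (bigID (fun v => v \notin terms J)) /= [X in _ + X]big1 ?addr0 //.
  by move=> v /negPn; apply: cap_term.
rewrite big_seq_cond [X in _ <= X]big_seq_cond; apply: ler_sum => v /andP[vp vT].
rewrite /cap inE vT pV //=.
by have := small v vp; rewrite vT /= -ltNge => /ltW/min_idPl->.
Qed.

Fixpoint seqs_upto (n : nat) : seq (seq V) :=
  if n is n'.+1 then [::] :: [seq x :: q | x <- enum V, q <- seqs_upto n']
  else [:: [::]].

Lemma mem_seqs_upto n q : (size q <= n)%N -> q \in seqs_upto n.
Proof.
elim: n q => [|n IH] [|x q] //= sq; rewrite inE; apply/orP; right.
by apply: (allpairs_f (fun x q => x :: q)); rewrite ?mem_enum ?IH.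
Qed.

Definition simple_walk (s v : V) (q : seq V) : bool :=
  if q is x :: q' then
    [&& x == s, path (edge J) x q', uniq q, all (mem (vset J)) q & last x q' == v]
  else false.

Definition dist (s v : V) : R :=
  \big[Num.min/1]_(q <- seqs_upto #|V| | simple_walk s v q) clen q.

Lemma dist_le1 s v : dist s v <= 1.
Proof. exact: bigmin_le_id. Qed.

Lemma dist_ge0 s v : 0 <= dist s v.
Proof. by apply: le_bigmin => [|q _]; rewrite ?ler01 ?clen_ge0. Qed.

Lemma dist_witness s v : dist s v < 1 ->
  exists q, [/\ path (edge J) s q, uniq (s :: q), all (mem (vset J)) (s :: q),
                last s q = v & dist s v = clen (s :: q)].
Proof.
rewrite /dist; have [->|[q _ [wq ->]] _] :=
  @bigmin_attained R _ (seqs_upto #|V|) (simple_walk s v) clen 1; first by rewrite ltxx.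
by case: q wq => [//|x q] /and5P[/eqP-> pq uq aq /eqP lq]; exists q.
Qed.

Lemma dist_walk s q : path (edge J) s q -> {subset s :: q <= vset J} ->
  dist s (last s q) <= clen (s :: q).
Proof.
move=> pq qV; case: (shortenP pq) => p' pp' up' sp'.
have sub : {subset s :: p' <= s :: q}.
  by move=> z; rewrite !inE => /predU1P[->|/sp' ->]; rewrite ?eqxx ?orbT.
have wp' : simple_walk s (last s p') (s :: p').
  by rewrite /simple_walk eqxx pp' up' eqxx andbT; apply/allP => z /sub /qV.
apply: bigmin_inf_seq wp' _; last exact: clen_sub.
by apply: mem_seqs_upto; rewrite -(card_uniqP up') max_card.
Qed.

Lemma dist_self s : s \in terms J -> s \in vset J -> dist s s = 0.
Proof.
move=> sT sV; apply: le_anti; rewrite dist_ge0 andbT.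
have := @dist_walk s [::] isT; rewrite /clen big_seq1 cap_term //.
by apply=> z; rewrite inE => /eqP->.
Qed.

Lemma dist_edge s u v : u \in vset J -> v \in vset J -> edge J u v ->
  dist s v <= dist s u + cap v.
Proof.
move=> uV vV euv; have [Hu|Hu] := ltP (dist s u) 1; last first.
  by apply: le_trans (dist_le1 _ _) (le_trans Hu _); rewrite lerDl cap_ge0.
have [q [pq uq aq lq ->]] := dist_witness Hu.
have walk_le := @dist_walk s (rcons q v); rewrite last_rcons in walk_le.
apply: le_trans (walk_le _ _) _.
- by rewrite rcons_path pq lq.
- by move=> z; rewrite -rcons_cons mem_rcons inE => /predU1P[->//|]; apply: (allP aq).
- by rewrite /clen -rcons_cons -cats1 big_cat big_seq1.
Qed.

(* Two terminals are at distance 1, by feasibility of the capped solution. *)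
Lemma dist_term s s' : s \in terms J -> s' \in terms J -> s != s' -> dist s s' = 1.
Proof.
move=> sT s'T ss'; apply: le_anti; rewrite dist_le1 /= leNgt; apply/negP => lt1.
have [q [pq uq aq lq dq]] := dist_witness lt1; move: lt1.
by rewrite dq ltNge cap_feasible // /term_path pq uq aq sT lq s'T ss'.
Qed.

Lemma dist_ge_cap s v : cap v <= dist s v.
Proof.
have [lt1|] := ltP (dist s v) 1; last exact: le_trans (cap_le1 v).
have [q [_ _ _ lq ->]] := dist_witness lt1.
by apply: (le_sum_one (P := predT)); rewrite -?lq ?mem_last // => x _ _; apply: cap_ge0.
Qed.

(* Gluing shortest walks from two terminals to v gives a terminal walk. *)
Lemma dist_pair s s' v : s \in terms J -> s' \in terms J -> s != s' ->
  1 <= dist s v + dist s' v - cap v.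
Proof.
move=> sT s'T ss'.
have [lt1|] := ltP (dist s v) 1; last by have := dist_ge_cap s' v; lra.
have [lt1'|] := ltP (dist s' v) 1; last by have := dist_ge_cap s v; lra.
have [q1 [pq1 uq1 aq1 lq1 ->]] := dist_witness lt1.
have [q2 [pq2 uq2 aq2 lq2 ->]] := dist_witness lt1'.
set q := q1 ++ rev (belast s' q2).
have back : rev (s' :: q2) = v :: rev (belast s' q2) by rewrite lastI rev_rcons lq2.
have pq : path (edge J) s q.
  rewrite cat_path pq1 /= lq1 -lq2 rev_path.
  by rewrite (eq_path (e' := edge J)) // => a b; rewrite symJ.
have lq : last s q = s'.
  have := congr1 (last v) back; rewrite rev_cons last_rcons /= => ->.
  by rewrite last_cat lq1.
have qV : {subset s :: q <= vset J}.
  move=> z; rewrite -cat_cons mem_cat => /orP[/(allP aq1)//|].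
  by rewrite mem_rev => /mem_belast /(allP aq2).
have clen_q : clen (s :: q) = clen (s :: q1) + clen (s' :: q2) - cap v.
  have -> : clen (s' :: q2) = cap v + clen (rev (belast s' q2)).
    by rewrite /clen -big_rev back big_cons.
  rewrite /clen /q -cat_cons big_cat /=; lra.
have [p tp sp] : exists2 p, term_path J p & {subset p <= s :: q}.
  by apply: (walk_term_path pq qV); rewrite ?lq.
by rewrite -clen_q; apply: le_trans (cap_feasible tp) (clen_sub (term_path_uniq tp) sp).
Qed.

(* The terminals s whose ball {u | dist s u < r} has v on its boundary. *)
Definition boundary (r : R) (v : V) : {set V} :=
  [set s in terms J | (dist s v - cap v < r) && (r <= dist s v)].

Definition round (r : R) (v : V) : R :=
  if v \in N then
    if (1 < #|boundary r v|)%N then 1 else if (0 < #|boundary r v|)%N then 2^-1 else 0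
  else 0.

Lemma round_ge0 r v : 0 <= round r v.
Proof. by rewrite /round; repeat case: ifP => _; rewrite ?ler01 ?invr_ge0 ?ler0n. Qed.

Lemma round_half_valued r : half_valued (round r).
Proof. by move=> v; rewrite /round; repeat case: ifP => _; auto. Qed.

Lemma round_ge_half r v s : v \in N -> s \in boundary r v -> 2^-1 <= round r v.
Proof.
move=> vN sb; rewrite /round vN; case: ifP => _; first by rewrite invf_le1 ?ler1n ?ltr0n.
by rewrite (_ : (0 < _)%N) //; apply/card_gt0P; exists s.
Qed.

Lemma round_two r v s s' : v \in N -> s \in boundary r v -> s' \in boundary r v ->
  s != s' -> round r v = 1.
Proof.
move=> vN sb s'b ss'; rewrite /round vN (_ : (1 < _)%N) //.
have /subset_leq_card : [set s; s'] \subset boundary r v.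
  by apply/subsetP => z; rewrite in_set2 => /orP[]/eqP->.
by rewrite cards2 ss'.
Qed.

Lemma boundary_on_path r s q : 0 < r -> r <= 1 -> term_path J (s :: q) ->
  exists2 b, b \in q & b \in N /\ s \in boundary r b.
Proof.
move=> r0 r1 tp; have pV := term_path_vset tp.
move: tp => /and5P[pq _ _ sT /andP[lT sl]].
have in_ball : dist s s < r by rewrite dist_self ?pV ?mem_head.
have out_ball : ~~ (dist s (last s q) < r) by rewrite -leNgt dist_term.
have [a [b [eab Pa Pb ain bin]]] :=
  path_crossing (P := fun z => dist s z < r) pq in_ball out_ball.
rewrite -leNgt in Pb; have bV : b \in vset J by rewrite pV // inE bin orbT.
have ab := dist_edge s (pV a ain) bV eab.
have bT : b \notin terms J.
  by apply/negP => bT; move: ab; rewrite cap_term // addr0; lra.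
by exists b => //; rewrite !inE bT bV sT /=; split=> //; apply/andP; split=> //; lra.
Qed.

(* Every terminal path contains a boundary vertex of each of its two end
   terminals, so rounding at a threshold in (0, 1/2] is feasible. *)
Lemma round_feasible r : 0 < r -> r <= 2^-1 -> lp_feasible J (round r).
Proof.
move=> r0 rh; have r1 : r <= 1 by apply: le_trans rh _; rewrite invf_le1 ?ler1n ?ltr0n.
split=> [v _|[//|s q] tp]; first exact: round_ge0.
have nn z : z \in s :: q -> z \notin terms J -> 0 <= round r z by move=> *; apply: round_ge0.
move: (tp) => /and5P[_ _ _ _ /andP[lT sl]].
have [b bq [bN sb]] := boundary_on_path r0 r1 tp.
have tp_rev : term_path J (last s q :: rev (belast s q)).
  by rewrite -rev_rcons -lastI; apply: term_path_rev.
have [b' /[!mem_rev] /mem_belast b'p [b'N lb']] := boundary_on_path r0 r1 tp_rev.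
have bT : b \notin terms J by move: bN; rewrite inE => /andP[].
have b'T : b' \notin terms J by move: b'N; rewrite inE => /andP[].
have bp : b \in s :: q by rewrite inE bq orbT.
have [eb|bb'] := eqVneq b b'.
  rewrite -eb in lb'; rewrite -(round_two bN sb lb' sl).
  exact: (le_sum_one (F := round r) (P := fun z => z \notin terms J) bp bT nn).
apply: le_trans (le_sum_two (F := round r) (P := fun z => z \notin terms J) bb' bp b'p bT b'T nn).
by have := round_ge_half bN sb; have := round_ge_half b'N lb'; lra.
Qed.

(* Above this threshold at most one terminal can have v on its boundary. *)
Definition second_threshold (s v : V) : R := Num.max (dist s v - cap v) (1 - dist s v).

(* The values of r at which v may enter or leave the boundary of s. *)
Definition thresholds (s v : V) : seq R :=
  [:: dist s v - cap v; dist s v; second_threshold s v].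

(* The positive clipped thresholds and 1/2, sorted: a partition of (0, 1/2]
   on whose pieces the indicator bounds of [round_le_indicators] are constant. *)
Definition breakpoints : seq R :=
  sort <=%R (2^-1 :: [seq z <- [seq clip z | z <- flatten
     [seq thresholds s v | s <- enum V, v <- enum V]] | 0 < z]).

Lemma breakpoints_range r : r \in breakpoints -> 0 < r /\ r <= 2^-1.
Proof.
rewrite mem_sort inE => /predU1P[->|]; first by split; [exact: half_gt0|].
by rewrite mem_filter => /andP[r0 /mapP[z _ rz]]; rewrite rz clip_le_half -rz.
Qed.

Lemma breakpoints_sorted : path <=%R 0 breakpoints.
Proof.
rewrite path_sortedE; last exact: le_trans.
rewrite sort_sorted ?andbT; last exact: le_total.
by apply/allP => r /breakpoints_range[/ltW].
Qed.

Lemma half_breakpoint : 2^-1 \in breakpoints.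
Proof. by rewrite mem_sort mem_head. Qed.

Lemma clip_breakpoint s v z : z \in thresholds s v -> clip z \in 0 :: breakpoints.
Proof.
move=> zt; rewrite inE; have [//|cz /=] := eqVneq (clip z) 0.
rewrite mem_sort inE mem_filter lt_neqAle (eq_sym 0) cz clip_ge0 /=; apply/orP; right.
apply: map_f; apply/flattenP; exists (thresholds s v) => //.
by apply: (allpairs_f thresholds); rewrite mem_enum.
Qed.

(* Pointwise bound on the rounding of v, against the terminal s1 minimising
   dist s v - cap v: v is on the boundary of s1 whenever it is on some
   boundary, and on a second one only above the second threshold. *)
Lemma round_le_indicators v s1 r : v \in N -> s1 \in terms J ->
  (forall s, s \in terms J -> dist s1 v - cap v <= dist s v - cap v) ->
  0 < r -> r <= 2^-1 ->
  round r v <=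
    2^-1 * (indicator (r <= clip (dist s1 v)) - indicator (r <= clip (dist s1 v - cap v)))
  + 2^-1 * (indicator (r <= 2^-1) - indicator (r <= clip (second_threshold s1 v))).
Proof.
move=> vN s1T s1min r0 rh; rewrite !clip_leE // rh /indicator /round vN.
have half := @half_gt0 R; have e0 := cap_ge0 v.
have [b0|[s0 s0b]] := set_0Vmem (boundary r v).
  rewrite b0 cards0 /=; case: (lerP r (dist s1 v)) => ?;
  case: (lerP r (dist s1 v - cap v)) => ?; case: (lerP r (second_threshold s1 v)) => ?; lra.
move: (s0b); rewrite inE => /andP[s0T /andP[lt0 le0]].
have s1min0 := s1min s0 s0T.
have le1 : r <= dist s1 v.
  rewrite leNgt; apply/negP => gt1.
  have [e01|s01] := eqVneq s0 s1; first by rewrite e01 in le0; lra.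
  by have := dist_pair v s0T s1T s01; have := @dist_le1 s0 v; lra.
have -> : (r <= dist s1 v - cap v) = false by apply/negbTE; rewrite -ltNge; lra.
rewrite le1 (_ : (0 < _)%N); last by apply/card_gt0P; exists s0.
case: ifP => [two|_]; last by case: ifP => _; lra.
have [s2 s2b s21] : exists2 s2, s2 \in boundary r v & s2 != s1.
  move: two; rewrite (cardsD1 s1) => lt1; have /card_gt0P[s2] : (0 < #|boundary r v :\ s1|)%N.
    by move: lt1; case: (s1 \in boundary r v) => /=; lia.
  by rewrite in_setD1 => /andP[s21 s2b]; exists s2.
move: s2b; rewrite inE => /andP[s2T /andP[lt2 _]].
have pair21 := dist_pair v s2T s1T s21; have min12 := s1min s2 s2T.
have -> : (r <= second_threshold s1 v) = false.
  by apply/negbTE; rewrite -ltNge gt_max; apply/andP; split; lra.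
lra.
Qed.

Lemma round_avg v : v \in N ->
  stepsum 0 breakpoints (fun r => round r v) <= 2^-1 * cap v.
Proof.
move=> vN; have half := @half_gt0 R.
have [T0|[s0 s0T]] := set_0Vmem (terms J).
  rewrite stepsum_eq0 ?mulr_ge0 ?cap_ge0 ?ltW // => r _.
  rewrite /round vN (_ : boundary r v = set0) ?cards0 //.
  by apply/setP => s; rewrite !inE T0 inE.
have [s1 s1T s1min] : exists2 s1, s1 \in enum (terms J) &
    forall s, s \in enum (terms J) -> dist s1 v - cap v <= dist s v - cap v.
  by apply: seq_argmin; apply/eqP => /(congr1 (fun l => s0 \in l)); rewrite mem_enum s0T.
have {}s1min s : s \in terms J -> dist s1 v - cap v <= dist s v - cap v.
  by move=> sT; apply: s1min; rewrite mem_enum.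
rewrite mem_enum in s1T; apply: le_trans (stepsum_mono breakpoints_sorted _) _.
  by move=> r /breakpoints_range[r0 rh]; apply: (round_le_indicators vN s1T s1min r0 rh).
have bp z : z \in thresholds s1 v -> clip z \in 0 :: breakpoints by apply: clip_breakpoint.
have hb : 2^-1 \in 0 :: breakpoints by rewrite inE half_breakpoint orbT.
rewrite stepsumD !stepsumZ !stepsumB !stepsum_indicator ?breakpoints_sorted ?hb ?bp
  ?inE ?eqxx ?orbT // !subr0 -mulrDr ler_pM2l //.
by apply: clip_bound; rewrite ?cap_ge0 ?dist_ge_cap ?dist_le1.
Qed.

Lemma round_exists :
  exists h, [/\ lp_feasible J h, half_valued h & lp_cost J h <= lp_cost J d].
Proof.
have half := @half_gt0 R.
have [r rL rmin] : exists2 r, r \in breakpoints &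
    forall r', r' \in breakpoints -> lp_cost J (round r) <= lp_cost J (round r').
  by apply: seq_argmin; apply/eqP => /(congr1 (fun l => 2^-1 \in l)); rewrite half_breakpoint.
have [r0 rh] := breakpoints_range rL.
exists (round r); split; [exact: round_feasible | exact: round_half_valued |].
have upper : stepsum 0 breakpoints (fun r' => lp_cost J (round r')) <= 2^-1 * lp_cost J d.
  rewrite /lp_cost (stepsum_sum _ _ _ (fun v r' => round r' v)) mulr_sumr.
  apply: ler_sum => v vN; apply: le_trans (round_avg vN) _.
  by rewrite ler_pM2l ?cap_le.
have lower : lp_cost J (round r) * 2^-1 <=
             stepsum 0 breakpoints (fun r' => lp_cost J (round r')).
  rewrite -[X in _ * X]subr0 -(stepsum_indicator breakpoints_sorted); last first.
    by rewrite inE half_breakpoint orbT.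
  rewrite -stepsumZ; apply: stepsum_mono breakpoints_sorted _ => r' r'L.
  by have [_ ->] := breakpoints_range r'L; rewrite /indicator mulr1 rmin.
by rewrite -(ler_pM2l half) mulrC (le_trans lower upper).
Qed.

End Rounding.

Lemma half_valued_ge0 (R : realFieldType) (V : Type) (h : V -> R) v :
  half_valued h -> 0 <= h v.
Proof. by move/(_ v) => [|[|]] ->; rewrite ?ler01 ?invr_ge0 ?ler0n. Qed.

Lemma lp_opt_half_valued (R : realFieldType) (V : finType) (J : instance V) (x : R) :
  symmetric (edge J) -> lp_opt J x ->
  exists h : V -> R, [/\ lp_feasible J h, half_valued h & lp_cost J h = x].
Proof.
move=> symJ [[d [fd _ <-]] lb]; have [h [fh hh ch]] := round_exists symJ fd.
by exists h; split=> //; apply: le_anti; rewrite ch lb.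
Qed.

Definition half_integral (R : realFieldType) (x : R) : Prop := exists n : nat, x = n%:R / 2.

Lemma lp_opt_half_integral (R : realFieldType) (V : finType) (J : instance V) (x : R) :
  symmetric (edge J) -> lp_opt J x -> half_integral x.
Proof.
move=> symJ /(lp_opt_half_valued symJ)[h [_ hh <-]].
pose twice v : nat := if h v == 0 then 0 else if h v == 2^-1 then 1 else 2.
have h2 v : h v = (twice v)%:R / 2.
  have half0 : (2^-1 : R) != 0 by rewrite invr_neq0 ?pnatr_eq0.
  have half1 : (1 : R) != 2^-1 by apply/eqP => e; have := @half_gt0 R; move: e; lra.
  rewrite /twice; case: (hh v) => [|[|]] ->; rewrite ?eqxx ?mul0r //.
    by rewrite (negbTE half0) /= mulr1n mul1r.
  by rewrite oner_eq0 (negbTE half1) divff ?pnatr_eq0.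
exists (\sum_(v in vset J :\: terms J) twice v).
by rewrite /lp_cost natr_sum mulr_suml; apply: eq_bigr => v _; rewrite h2.
Qed.

Lemma half_integralDhalf (R : realFieldType) (x : R) :
  half_integral x -> half_integral (x + 2^-1).
Proof. by case=> n ->; exists n.+1; rewrite -[n.+1]addn1 natrD mulrDl mulr1n div1r. Qed.

Lemma half_integral_gap (R : realFieldType) (x y : R) :
  half_integral x -> half_integral y -> x < y -> x + 2^-1 <= y.
Proof.
move=> [n ->] [m ->]; rewrite ltr_pM2r ?invr_gt0 ?ltr0n // ltr_nat => lt_nm.
have : (n.+1)%:R <= m%:R :> R by rewrite ler_nat.
by rewrite -[n.+1]addn1 natrD mulr1n; lra.
Qed.

Section Reductions.
Variables (R : realFieldType) (V : finType) (I : instance V).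
Hypothesis symI : symmetric (edge I).
Hypothesis R1 : forall a b, a \in terms I -> b \in terms I -> ~~ edge I a b.
Hypothesis R2 : forall v a b, v \in vset I :\: terms I -> a \in terms I ->
  b \in terms I -> a != b -> edge I v a -> edge I v b -> False.
Hypothesis R3 : forall (t' w' : V) (x y : R), t' \in terms I ->
  w' \in vset I :\: terms I -> edge I t' w' -> lp_opt I x ->
  lp_opt_st I (fun d => d w' = 0) y -> x < y.

Lemma second_vertex s q : term_path I (s :: q) ->
  exists2 y, y \in q & y \in vset I :\: terms I /\ edge I s y.
Proof.
move=> tp; have pV := term_path_vset tp.
case: q tp pV => [|y q] /and5P[pq _ _ sT /andP[lT sl]] pV; first by rewrite eqxx in sl.
move: pq => /= /andP[esy _]; exists y; rewrite ?mem_head //; split=> //.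
rewrite inE pV ?inE ?eqxx ?orbT // andbT.
by apply/negP => yT; move: (R1 sT yT); rewrite esy.
Qed.

Lemma opt_pos_near_terminal (x : R) (d : V -> R) s u :
  lp_opt I x -> lp_feasible I d -> lp_cost I d = x ->
  s \in terms I -> u \in vset I :\: terms I -> edge I s u -> d u != 0.
Proof.
move=> ox fd cd sT uN esu; apply/eqP => du0.
suff : x < x by rewrite ltxx.
by apply: (R3 sT uN esu ox); split=> [|d' fd' _]; [exists d | apply: ox.2].
Qed.

Lemma opt_positive_off w (x : R) (d : V -> R) p :
  lp_opt I x -> lp_feasible I d -> lp_cost I d = x -> term_path I p ->
  exists2 v, v \in p & [/\ v \notin terms I, v != w & d v != 0].
Proof.
move=> ox fd cd; case: p => [//|s q] tp.
have [y yq [yN esy]] := second_vertex tp.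
have tp_rev : term_path I (last s q :: rev (belast s q)).
  by rewrite -rev_rcons -lastI; apply: term_path_rev.
have [z /[!mem_rev] /mem_belast zp [zN elz]] := second_vertex tp_rev.
have yp : y \in s :: q by rewrite inE yq orbT.
have nT u : u \in vset I :\: terms I -> u \notin terms I by rewrite inE => /andP[].
move: (tp) => /and5P[_ _ _ sT /andP[lT sl]].
have [yw|yw] := eqVneq y w; last first.
  by exists y => //; split; rewrite ?nT ?(opt_pos_near_terminal ox fd cd sT yN esy).
have [zw|zw] := eqVneq z w; last first.
  by exists z => //; split; rewrite ?nT ?(opt_pos_near_terminal ox fd cd lT zN elz).
exfalso; apply: (R2 yN sT lT sl); first by rewrite symI.
by rewrite yw -zw symI.
Qed.

(* Deleting w decreases the LP value by at most 1/2: otherwise an optimal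
   half-valued solution of G - w, raised to 1 at w, would be optimal for G, and
   by [opt_positive_off] raising it only to 1/2 would already be feasible. *)
Lemma lp_del_bound w (x x1 : R) : w \in vset I :\: terms I ->
  lp_opt I x -> lp_opt (del_inst I w) x1 -> x - 2^-1 <= x1.
Proof.
move=> wN ox ox1; have wT : w \notin terms I by move: wN; rewrite inE => /andP[].
have half := @half_gt0 R.
have [h1 [fh1 hh1 ch1]] := lp_opt_half_valued (J := del_inst I w) symI ox1.
rewrite leNgt; apply/negP => lt.
have gap : x1 + 2^-1 + 2^-1 <= x.
  apply: half_integral_gap; last lra.
    exact/half_integralDhalf/(lp_opt_half_integral (J := del_inst I w) symI ox1).
  exact: lp_opt_half_integral symI ox.
have set_ge0 c v : 0 <= c -> 0 <= set_at h1 w c v.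
  by rewrite /set_at; case: eqP => // _ _; apply: half_valued_ge0.
pose d1 := set_at h1 w 1.
have fd1 : lp_feasible I d1.
  apply: feasible_set_at fh1 ler01 _ => p tp wp.
  apply: le_trans (le_sum_one (F := d1) (P := fun v => v \notin terms I) wp wT _).
    by rewrite /d1 /set_at eqxx.
  by move=> v _ _; apply: set_ge0 ler01.
have od1 : lp_cost I d1 = x.
  by apply: le_anti; rewrite ox.2 // andbT /d1 cost_set_at // ch1; lra.
pose h2 := set_at h1 w 2^-1.
have fh2 : lp_feasible I h2.
  apply: feasible_set_at fh1 (ltW half) _ => p tp wp.
  have [v vp [vT vw]] := opt_positive_off w ox fd1 od1 tp.
  rewrite /d1 /set_at (negbTE vw) => h1v.
  have hv : 2^-1 <= h1 v by case: (hh1 v) h1v => [->|[->|->]]; rewrite ?eqxx //; lra.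
  apply: le_trans (le_sum_two (F := h2) (P := fun v => v \notin terms I) _ wp vp wT vT _).
  - by rewrite /h2 /set_at eqxx (negbTE vw); lra.
  - by rewrite eq_sym.
  - by move=> u _ _; apply: set_ge0; lra.
by have := ox.2 h2 fh2 Logic.I; rewrite /h2 cost_set_at // ch1; lra.
Qed.

(* Contracting w into t increases the LP value by at least 1/2: the increase
   is positive by (R3) and the LP value of G/tw is the LP of G under d_w = 0. *)
Lemma lp_contr_bound t w (x x2 : R) : wf_instance I -> t \in terms I ->
  w \in vset I :\: terms I -> edge I t w ->
  lp_opt I x -> lp_opt (contr_inst I t w) x2 -> x + 2^-1 <= x2.
Proof.
move=> wfI tT wN etw ox ox2; apply: half_integral_gap.
- exact: lp_opt_half_integral symI ox.
- exact: lp_opt_half_integral (contr_symmetric t w wfI) ox2.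
- exact: R3 tT wN etw ox (lp_contr_restr wfI tT wN etw ox2).
Qed.

End Reductions.

Unset Implicit Arguments.

Theorem mainTheorem4 (R : realFieldType) (V : finType) (I : instance V) (t w : V) :
  wf_instance I ->
  (* (R1) *)
  (forall a b, a \in terms I -> b \in terms I -> ~~ edge I a b) ->
  (forall x : R, lp_opt I x -> 0 <= pval I x) ->
  (* (R2) *)
  (forall v a b, v \in vset I :\: terms I -> a \in terms I -> b \in terms I ->
     a != b -> edge I v a -> edge I v b -> False) ->
  (* (R3) *)
  (forall (t' w' : V) (x y : R), t' \in terms I -> w' \in vset I :\: terms I ->
     edge I t' w' -> lp_opt I x -> lp_opt_st I (fun d => d w' = 0) y -> x < y) ->
  t \in terms I -> w \in vset I :\: terms I -> edge I t w ->
  (forall x x1 : R, lp_opt I x -> lp_opt (del_inst I w) x1 ->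
     x - 2^-1 <= x1 /\ pval (del_inst I w) x1 <= pval I x - 2^-1) /\
  (forall x x2 : R, lp_opt I x -> lp_opt (contr_inst I t w) x2 ->
     x + 2^-1 <= x2 /\ pval (contr_inst I t w) x2 <= pval I x - 2^-1) /\
  (yes_instance I <-> yes_instance (del_inst I w) \/ yes_instance (contr_inst I t w)).
Proof.
move=> wfI R1 _ R2 R3 tT wN etw; have [symI _ _] := wfI.
split; [|split]; last exact: yes_del_or_contr.
- move=> x x1 ox ox1; have := lp_del_bound symI R1 R2 R3 wN ox ox1.
  by split=> //; rewrite /pval /= intrB; lra.
- move=> x x2 ox ox2; have := lp_contr_bound symI R3 wfI tT wN etw ox ox2.
  by split=> //; rewrite /pval /=; lra.
Qed.
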